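(* Let $Config=(R,F,M,I)$ be a configuration of legal rules and let $ASP_{Config}$ be its answer set program encoding (both defined in the context). Let $A_{Config}$ be any answer set (stable model) of $ASP_{Config}$, and let $S_{A_{Config}}$ be the set of all atoms of the forms $is\_legal(\cdot)$ and $legally\_valid(\cdot,\cdot)$ belonging to $A_{Config}$. Then $S_{A_{Config}}$ is a legal model of $Config$.
   Context: A configuration is a tuple $Config=(R,F,M,I)$ where: $R$ is a finite set of rules, each rule $r$ having a unique integer id (also denoted $r$), a precondition $pre\_con(r)$ which is a conjunction $b_1\wedge\dots\wedge b_m\wedge not\ b_{m+1}\wedge\dots\wedge not\ b_n$ of ground atoms and negation-as-failure literals, and a conclusion $C_r$ which is a single ground atom; $F$ is a finite set of ground atoms (facts); $M$ is a finite set of ground atoms of the forms $despite(r_i,r_j)$, $subject\_to(r_i,r_j)$, $strong\_subject\_to(r_i,r_j)$ with $r_i,r_j$ rule ids; $I$ is a finite collection of finite sets of ground atoms (''minimal inconsistent sets''), each containing at least 2 atoms. For a set $S$ of atoms, $S\models is\_legal(pre\_con(r))$ means: $is\_legal(b_i)\in S$ for every positive atom $b_i$ of $pre\_con(r)$ and $is\_legal(b_j)\notin S$ for every negated atom $not\ b_j$; for a set of atoms $A$, $is\_legal(A)=\{is\_legal(a): a\in A\}$. A set $S$ of atoms of the forms $is\_legal(c)$ and $legally\_valid(r,c)$ is a legal model of $Config$ iff: (A1) $is\_legal(f)\in S$ for all $f\in F$; (A2) for all $r\in R$, if $legally\_valid(r,C_r)\in S$ then $S\models is\_legal(pre\_con(r))$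 and $is\_legal(C_r)\in S$; (A3) for all $c$, if $is\_legal(c)\in S$ then $c\in F$ or there is $r\in R$ with $legally\_valid(r,C_r)\in S$ and $c=C_r$; (A4) for all $r_i,r_j\in R$, if $despite(r_i,r_j)\in M$ and $S\models is\_legal(pre\_con(r_j))$ then $legally\_valid(r_i,C_{r_i})\notin S$; (A5) for all $r_i,r_j\in R$, if $strong\_subject\_to(r_i,r_j)\in M$ and $legally\_valid(r_i,C_{r_i})\in S$ then $legally\_valid(r_j,C_{r_j})\notin S$; (A6) for all $r_i,r_j\in R$, if $subject\_to(r_i,r_j)\in M$, $legally\_valid(r_i,C_{r_i})\in S$, and there is $k\in I$ containing $C_{r_i}$ and $C_{r_j}$ as two distinct elements with $is\_legal(k\setminus\{C_{r_j}\})\subseteq S$, then $legally\_valid(r_j,C_{r_j})\notin S$; (A7) for all $r\in R$, if $S\models is\_legal(pre\_con(r))$ but $legally\_valid(r,C_r)\notin S$, then this exclusion is forced by one of (A4)–(A6), i.e. there is $r'\in R$ such that either $despite(r,r')\in M$ and $S\models is\_legal(pre\_con(r'))$; or $strong\_subject\_to(r',r)\in M$ and $legally\_valid(r',C_{r'})\in S$; or $subject\_to(r',r)\in M$, $legally\_valid(r',C_{r'})\in S$ and some $k\in I$ contains $C_{r'}$ and $C_r$ as distinct elements with $is\_legal(k\setminus\{C_r\})\subseteq S$. The program $ASP_{Config}$ (atoms of the configuration are used as ground terms; $R,C,R1,C1,X,Y$ are variables; $not$ is negation as failure) consists of: the fact $is\_legal(f).$ for each $f\in F$; each element of $M$ as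 a fact; for each rule $r$ with $pre\_con(r)=b_1\wedge\dots\wedge b_m\wedge not\ b_{m+1}\wedge\dots\wedge not\ b_n$ the rule $according\_to(r,C_r)\leftarrow is\_legal(b_1),\dots,is\_legal(b_m),not\ is\_legal(b_{m+1}),\dots,not\ is\_legal(b_n).$; for each $k=\{a_1,\dots,a_n\}\in I$ and each $1\le i<j\le n$ the rule $opposes(a_i,a_j)\leftarrow is\_legal(a_l)$ for all $l\notin\{i,j\}$; and the rules $opposes(X,Y)\leftarrow opposes(Y,X).$ $defeated(R,C,R1)\leftarrow according\_to(R,C),according\_to(R1,C1),despite(R,R1).$ $defeated(R,C,R1)\leftarrow according\_to(R,C),legally\_valid(R1,C1),opposes(C,C1),subject\_to(R1,R).$ $defeated(R,C,R1)\leftarrow according\_to(R,C),legally\_valid(R1,C1),strong\_subject\_to(R1,R).$ $not\_legally\_valid(R)\leftarrow defeated(R,C,R1).$ $legally\_valid(R,C)\leftarrow according\_to(R,C),not\ not\_legally\_valid(R).$ $is\_legal(C)\leftarrow legally\_valid(R,C).$ Answer sets are the stable models of (the ground instantiation of) this program under the standard stable model semantics. *)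

From Stdlib Require Import List ZArith.
Import ListNotations.
Set Implicit Arguments.

Section Defs.
Variable Atom : Type.

(* A rule: unique integer id, precondition b1..bm /\ not b(m+1) .. not bn,
   single-atom conclusion. *)
Record rule := mkRule { rid : Z; rpos : list Atom; rneg : list Atom; rconc : Atom }.

Inductive meta :=
| Despite (ri rj : Z) | SubjectTo (ri rj : Z) | StrongSubjectTo (ri rj : Z).

Record config := mkConfig {
  cR : list rule;
  cF : list Atom;
  cM : list meta;
  cI : list (list Atom) }.      (* minimal inconsistent sets *)

Definition wf_config (c : config) : Prop :=
  NoDup (map rid (cR c)) /\
  (forall k, In k (cI c) -> NoDup k /\ 2 <= length k).

Inductive term := TR (n : Z) | TA (a : Atom).

Inductive gatom :=
| g_is_legal (c : term)
| g_legally_valid (r c : term)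
| g_according_to (r c : term)
| g_opposes (x y : term)
| g_defeated (r c r1 : term)
| g_not_legally_valid (r : term)
| g_despite (ri rj : term)
| g_subject_to (ri rj : term)
| g_strong_subject_to (ri rj : term).

Record grule := GR { ghead : gatom; gpos : list gatom; gneg : list gatom }.

Definition isl (a : Atom) : gatom := g_is_legal (TA a).

Definition meta_atom (m : meta) : gatom :=
  match m with
  | Despite i j => g_despite (TR i) (TR j)
  | SubjectTo i j => g_subject_to (TR i) (TR j)
  | StrongSubjectTo i j => g_strong_subject_to (TR i) (TR j)
  end.

Inductive asp_program (c : config) : grule -> Prop :=
| ap_fact : forall f, In f (cF c) -> asp_program c (GR (isl f) [] [])
| ap_meta : forall m, In m (cM c) -> asp_program c (GR (meta_atom m) [] [])
| ap_rule : forall r, In r (cR c) ->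
    asp_program c (GR (g_according_to (TR (rid r)) (TA (rconc r)))
                      (map isl (rpos r)) (map isl (rneg r)))
| ap_opp : forall pre ai mid aj post,
    In (pre ++ ai :: mid ++ aj :: post) (cI c) ->
    asp_program c (GR (g_opposes (TA ai) (TA aj)) (map isl (pre ++ mid ++ post)) [])
| ap_sym : forall X Y, asp_program c (GR (g_opposes X Y) [g_opposes Y X] [])
| ap_def1 : forall R C R1 C1,
    asp_program c (GR (g_defeated R C R1)
                      [g_according_to R C; g_according_to R1 C1; g_despite R R1] [])
| ap_def2 : forall R C R1 C1,
    asp_program c (GR (g_defeated R C R1)
                      [g_according_to R C; g_legally_valid R1 C1; g_opposes C C1;
                       g_subject_to R1 R] [])
| ap_def3 : forall R C R1 C1,
    asp_program c (GR (g_defeated R C R1)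
                      [g_according_to R C; g_legally_valid R1 C1;
                       g_strong_subject_to R1 R] [])
| ap_nlv : forall R C R1,
    asp_program c (GR (g_not_legally_valid R) [g_defeated R C R1] [])
| ap_lv : forall R C,
    asp_program c (GR (g_legally_valid R C) [g_according_to R C] [g_not_legally_valid R])
| ap_il : forall R C,
    asp_program c (GR (g_is_legal C) [g_legally_valid R C] []).

(* M is closed under the Gelfond-Lifschitz reduct of P w.r.t. S. *)
Definition reduct_closed (P : grule -> Prop) (S M : gatom -> Prop) : Prop :=
  forall r, P r -> (forall b, In b (gneg r) -> ~ S b) ->
  (forall b, In b (gpos r) -> M b) -> M (ghead r).

Definition answer_set (P : grule -> Prop) (S : gatom -> Prop) : Prop :=
  reduct_closed P S S /\ (forall M, reduct_closed P S M -> forall a, S a -> M a).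

Definition is_il_or_lv (a : gatom) : Prop :=
  match a with
  | g_is_legal _ | g_legally_valid _ _ => True
  | _ => False
  end.

Definition S_of (A : gatom -> Prop) : gatom -> Prop := fun a => A a /\ is_il_or_lv a.

Definition sat_pre (S : gatom -> Prop) (r : rule) : Prop :=
  (forall b, In b (rpos r) -> S (isl b)) /\ (forall b, In b (rneg r) -> ~ S (isl b)).

Definition lv (S : gatom -> Prop) (r : rule) : Prop :=
  S (g_legally_valid (TR (rid r)) (TA (rconc r))).

Definition opp_cond (c : config) (S : gatom -> Prop) (ci cj : Atom) : Prop :=
  exists k, In k (cI c) /\ In ci k /\ In cj k /\ ci <> cj /\
            (forall a, In a k -> a <> cj -> S (isl a)).

Definition legal_model (c : config) (S : gatom -> Prop) : Prop :=
  (forall a, S a -> is_il_or_lv a) /\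
  (forall f, In f (cF c) -> S (isl f)) /\
  (forall r, In r (cR c) -> lv S r -> sat_pre S r /\ S (isl (rconc r))) /\
  (forall t, S (g_is_legal t) ->
     (exists f, In f (cF c) /\ t = TA f) \/
     (exists r, In r (cR c) /\ lv S r /\ t = TA (rconc r))) /\
  (forall ri rj, In ri (cR c) -> In rj (cR c) ->
     In (Despite (rid ri) (rid rj)) (cM c) -> sat_pre S rj -> ~ lv S ri) /\
  (forall ri rj, In ri (cR c) -> In rj (cR c) ->
     In (StrongSubjectTo (rid ri) (rid rj)) (cM c) -> lv S ri -> ~ lv S rj) /\
  (forall ri rj, In ri (cR c) -> In rj (cR c) ->
     In (SubjectTo (rid ri) (rid rj)) (cM c) -> lv S ri ->
     opp_cond c S (rconc ri) (rconc rj) -> ~ lv S rj) /\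
  (forall r, In r (cR c) -> sat_pre S r -> ~ lv S r ->
     exists r', In r' (cR c) /\
       ((In (Despite (rid r) (rid r')) (cM c) /\ sat_pre S r') \/
        (In (StrongSubjectTo (rid r') (rid r)) (cM c) /\ lv S r') \/
        (In (SubjectTo (rid r') (rid r)) (cM c) /\ lv S r' /\
         opp_cond c S (rconc r') (rconc r)))).

End Defs.

(* An answer set A is closed under the program and, being least, every atom of A is supported:
   it heads a program rule whose body holds in A. Hence each derived predicate agrees with its
   Clark completion on A: according_to(r, C_r) holds iff pre_con(r) does; opposes(x, y) iff
   is_legal(k \ {x, y}) lies in A for some k in I containing x and y; and legally_valid(r, C_r)
   iff pre_con(r) holds and r is overridden by no despite, strong_subject_to or subject_to atom.
   Since rule ids are unique, a rule can be recovered from its id, and (A1)-(A7) are direct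
   readings of these equivalences. *)

From Stdlib Require Import List ZArith Classical.
Set Implicit Arguments.

Lemma NoDup_map_inj_in {X Y : Type} (f : X -> Y) {l : list X} {x y} :
  NoDup (map f l) -> In x l -> In y l -> f x = f y -> x = y.
Proof.
  induction l as [|z l IH]; simpl; [contradiction|].
  intros Hnd Hx Hy Hf; inversion_clear Hnd as [|? ? Hz Hnd'].
  destruct Hx as [<-|Hx], Hy as [<-|Hy]; auto;
    exfalso; apply Hz; [rewrite Hf | rewrite <- Hf]; apply in_map; assumption.
Qed.

Lemma in_split_two {X : Type} {k : list X} {x y} :
  In x k -> In y k -> x <> y ->
  exists pre mid post,
    k = pre ++ x :: mid ++ y :: post \/ k = pre ++ y :: mid ++ x :: post.
Proof.
  intros Hx Hy Hxy.
  destruct (in_split _ _ Hx) as (l1 & l2 & ->).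
  apply in_app_or in Hy as [Hy|[<-|Hy]]; [|congruence|].
  - destruct (in_split _ _ Hy) as (m1 & m2 & ->).
    exists m1, m2, l2; right; rewrite <- app_assoc; reflexivity.
  - destruct (in_split _ _ Hy) as (m1 & m2 & ->).
    exists l1, m1, m2; left; reflexivity.
Qed.

Lemma in_remove_two_iff {X : Type} {pre} {x : X} {mid y post a} :
  NoDup (pre ++ x :: mid ++ y :: post) ->
  In a (pre ++ mid ++ post) <-> In a (pre ++ x :: mid ++ y :: post) /\ a <> x /\ a <> y.
Proof.
  intros Hnd.
  pose proof (NoDup_remove_2 _ _ _ Hnd) as Hx.
  rewrite app_comm_cons, app_assoc in Hnd.
  pose proof (NoDup_remove_2 _ _ _ Hnd) as Hy.
  clear Hnd; repeat (simpl in *; rewrite ?in_app_iff in * ).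
  split; [intros Ha; split; [tauto | split; intros ->; tauto] | intuition congruence].
Qed.

Lemma NoDup_two_neq {X : Type} {pre} {x : X} {mid y post} :
  NoDup (pre ++ x :: mid ++ y :: post) -> x <> y.
Proof.
  intros Hnd ->; apply (NoDup_remove_2 _ _ _ Hnd).
  rewrite !in_app_iff; simpl; tauto.
Qed.

Section AnswerSets.
Variables (Atom : Type) (P : grule Atom -> Prop) (A : gatom Atom -> Prop).
Hypothesis HA : answer_set P A.

Lemma answer_set_ind (Q : gatom Atom -> Prop) :
  (forall r, P r -> (forall b, In b (gneg r) -> ~ A b) ->
     (forall b, In b (gpos r) -> A b /\ Q b) -> Q (ghead r)) ->
  forall a, A a -> Q a.
Proof.
  destruct HA as [Hclosed Hleast]; intros HQ.
  refine (fun a Ha => proj2 (Hleast (fun b => A b /\ Q b) _ a Ha)).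
  intros r Hr Hneg Hpos; split.
  - apply Hclosed; auto; intros b Hb; apply (Hpos b Hb).
  - apply HQ; auto.
Qed.

Lemma answer_set_supported {a} :
  A a -> exists r, P r /\ ghead r = a /\
    (forall b, In b (gpos r) -> A b) /\ (forall b, In b (gneg r) -> ~ A b).
Proof.
  revert a; apply answer_set_ind; intros r Hr Hneg Hpos.
  exists r; repeat split; auto; intros b Hb; apply (Hpos b Hb).
Qed.

Lemma answer_set_derive {r} :
  P r -> Forall A (gpos r) -> Forall (fun b => ~ A b) (gneg r) -> A (ghead r).
Proof.
  rewrite !Forall_forall; intros Hr Hpos Hneg; apply (proj1 HA); auto.
Qed.

End AnswerSets.

(* The body of the ground rule opposes(x, y) <- is_legal(k \ {x, y}). *)
Definition opposed_in (Atom : Type) (c : config Atom) (A : gatom Atom -> Prop) (x y : Atom) : Prop :=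
  exists k, In k (cI c) /\ In x k /\ In y k /\ x <> y /\
    (forall a, In a k -> a <> x -> a <> y -> A (isl a)).

Lemma opposed_in_sym (Atom : Type) (c : config Atom) A x y :
  opposed_in c A x y -> opposed_in c A y x.
Proof.
  intros (k & Hk & Hx & Hy & Hxy & Hall).
  exists k; repeat split; auto.
Qed.

Lemma opp_cond_iff (Atom : Type) (c : config Atom) A x y :
  opp_cond c (S_of A) x y <-> opposed_in c A x y /\ A (isl x).
Proof.
  split.
  - intros (k & Hk & Hx & Hy & Hxy & Hall); split.
    + exists k; repeat split; auto; intros a Ha _ Hay; apply (Hall a Ha Hay).
    + apply (Hall x Hx Hxy).
  - intros [(k & Hk & Hx & Hy & Hxy & Hall) Hlx].
    exists k; do 4 (split; [assumption |]).
    intros a Ha Hay; split; [| exact I].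
    destruct (classic (a = x)) as [->|Hax]; auto.
Qed.

(* The conclusion of (A7): some r' blocks r in one of the ways (A4)-(A6) forbid. *)
Definition overridden (Atom : Type) (c : config Atom) (S : gatom Atom -> Prop) (r : rule Atom) : Prop :=
  exists r', In r' (cR c) /\
    ((In (Despite (rid r) (rid r')) (cM c) /\ sat_pre S r') \/
     (In (StrongSubjectTo (rid r') (rid r)) (cM c) /\ lv S r') \/
     (In (SubjectTo (rid r') (rid r)) (cM c) /\ lv S r' /\
      opp_cond c S (rconc r') (rconc r))).

Section Encoding.
Variables (Atom : Type) (c : config Atom) (A : gatom Atom -> Prop).
Hypothesis Hwf : wf_config c.
Hypothesis HA : answer_set (asp_program c) A.

Ltac invert_supported H Hpos Hneg :=
  let Hr := fresh "Hr" in let Hh := fresh "Hh" in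
  destruct (answer_set_supported HA H) as (? & Hr & Hh & Hpos & Hneg);
  destruct Hr; try match goal with m : meta |- _ => destruct m end;
  simpl in *; try discriminate; injection Hh; intros; subst.

Lemma meta_atom_iff m : A (meta_atom Atom m) <-> In m (cM c).
Proof.
  split.
  - intros Hm; destruct (answer_set_supported HA Hm) as (r & Hr & Hh & _).
    destruct Hr as [|m' Hm'| | | | | | | | |]; destruct m; simpl in Hh; try discriminate;
      destruct m'; simpl in Hh; try discriminate; injection Hh as -> ->; exact Hm'.
  - intros Hm; apply (answer_set_derive HA (ap_meta c m Hm)); constructor.
Qed.

Lemma according_to_inv {R C} :
  A (g_according_to R C) ->
  exists r, In r (cR c) /\ R = TR Atom (rid r) /\ C = TA (rconc r) /\ sat_pre (S_of A) r.
Proof.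
  intros H; invert_supported H Hpos Hneg.
  exists r; do 3 (split; [auto |]); split.
  - intros b Hb; split; [apply Hpos, in_map, Hb | exact I].
  - intros b Hb [Hl _]; apply (Hneg (isl b)); [apply in_map, Hb | exact Hl].
Qed.

Lemma according_to_rule {r} :
  In r (cR c) -> sat_pre (S_of A) r -> A (g_according_to (TR Atom (rid r)) (TA (rconc r))).
Proof.
  intros Hr [Hpos Hneg]; apply (answer_set_derive HA (ap_rule c r Hr)); simpl;
    rewrite Forall_map, Forall_forall; intros b Hb.
  - apply (Hpos b Hb).
  - intros Hl; apply (Hneg b Hb); split; [exact Hl | exact I].
Qed.

Lemma according_to_rid_inv {r C} :
  In r (cR c) -> A (g_according_to (TR Atom (rid r)) C) ->
  C = TA (rconc r) /\ sat_pre (S_of A) r.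
Proof.
  intros Hr H; destruct (according_to_inv H) as (r' & Hr' & Hid & -> & Hsat).
  injection Hid as Hid.
  rewrite (NoDup_map_inj_in _ (proj1 Hwf) Hr Hr' Hid); auto.
Qed.

Lemma legally_valid_iff R C :
  A (g_legally_valid R C) <-> A (g_according_to R C) /\ ~ A (g_not_legally_valid R).
Proof.
  split.
  - intros H; invert_supported H Hpos Hneg.
    split; [apply Hpos | apply Hneg]; left; reflexivity.
  - intros [Hacc Hn]; apply (answer_set_derive HA (ap_lv c R C)); repeat constructor; assumption.
Qed.

Lemma legally_valid_inv {R C} :
  A (g_legally_valid R C) -> exists r, In r (cR c) /\ R = TR Atom (rid r) /\ C = TA (rconc r).
Proof.
  intros H; apply legally_valid_iff in H as [H _].
  destruct (according_to_inv H) as (r & Hr & HR & HC & _); eauto.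
Qed.

Lemma is_legal_iff t :
  A (g_is_legal t) <->
  (exists f, In f (cF c) /\ t = TA f) \/ (exists R, A (g_legally_valid R t)).
Proof.
  split.
  - intros H; invert_supported H Hpos Hneg; [left; eauto | right; eexists; apply Hpos; left; reflexivity].
  - intros [(f & Hf & ->) | (R & HR)];
      [apply (answer_set_derive HA (ap_fact c f Hf)) | apply (answer_set_derive HA (ap_il c R t))];
      repeat constructor; assumption.
Qed.

Lemma not_legally_valid_iff R :
  A (g_not_legally_valid R) <-> exists C R1, A (g_defeated R C R1).
Proof.
  split.
  - intros H; invert_supported H Hpos Hneg; do 2 eexists; apply Hpos; left; reflexivity.
  - intros (C & R1 & H); apply (answer_set_derive HA (ap_nlv c R C R1)); repeat constructor; assumption.
Qed.

Lemma defeated_iff R C R1 :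
  A (g_defeated R C R1) <->
  A (g_according_to R C) /\ exists C1,
    (A (g_according_to R1 C1) /\ A (g_despite R R1)) \/
    (A (g_legally_valid R1 C1) /\ A (g_opposes C C1) /\ A (g_subject_to R1 R)) \/
    (A (g_legally_valid R1 C1) /\ A (g_strong_subject_to R1 R)).
Proof.
  split.
  - intros H; invert_supported H Hpos Hneg; (split; [apply Hpos; simpl; tauto | eexists]);
      [left | right; left | right; right]; repeat split; apply Hpos; simpl; tauto.
  - intros (Hacc & C1 & [(H1 & H2) | [(H1 & H2 & H3) | (H1 & H2)]]);
      [apply (answer_set_derive HA (ap_def1 c R C R1 C1)) |
       apply (answer_set_derive HA (ap_def2 c R C R1 C1)) |
       apply (answer_set_derive HA (ap_def3 c R C R1 C1))];
      repeat constructor; assumption.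
Qed.

Lemma opposes_sym X Y : A (g_opposes X Y) -> A (g_opposes Y X).
Proof.
  intros H; apply (answer_set_derive HA (ap_sym c Y X)); repeat constructor; assumption.
Qed.

Lemma opposes_iff x y : A (g_opposes (TA x) (TA y)) <-> opposed_in c A x y.
Proof.
  split.
  - (* The symmetry rule supports opposes atoms by other opposes atoms, so we need induction
       over the least model rather than a single support step. *)
    intros H.
    refine (answer_set_ind HA
      (fun a => match a with g_opposes (TA x) (TA y) => opposed_in c A x y | _ => True end)
      _ _ H).
    intros r Hr Hneg Hpos; destruct Hr as [|m| |pre ai mid aj post Hk|X Y| | | | | |]; simpl; auto.
    + destruct m; exact I.
    + pose proof (proj1 (proj2 Hwf _ Hk)) as Hnd.
      exists (pre ++ ai :: mid ++ aj :: post); repeat split; auto.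
      * apply in_elt.
      * rewrite in_app_iff; right; right; apply in_elt.
      * apply (NoDup_two_neq Hnd).
      * intros a Ha Hai Haj; apply (Hpos (isl a)), in_map, (in_remove_two_iff Hnd); auto.
    + destruct X as [|x']; destruct Y as [|y']; auto.
      apply opposed_in_sym, (Hpos (g_opposes (TA y') (TA x'))); left; reflexivity.
  - intros (k & Hk & Hx & Hy & Hxy & Hall).
    pose proof (proj1 (proj2 Hwf _ Hk)) as Hnd.
    destruct (in_split_two Hx Hy Hxy) as (pre & mid & post & [-> | ->]); [| apply opposes_sym];
      (apply (answer_set_derive HA (ap_opp c _ _ _ _ _ Hk)); [| constructor]);
      simpl; rewrite Forall_map, Forall_forall;
      intros a Ha; apply (in_remove_two_iff Hnd) in Ha as (Ha & ? & ?); auto.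
Qed.

Lemma defeated_overridden {r C R1} :
  In r (cR c) -> A (g_defeated (TR Atom (rid r)) C R1) -> overridden c (S_of A) r.
Proof.
  intros Hr H; apply defeated_iff in H as (Hacc & C1 & [(H1 & H2) | [(H1 & H2 & H3) | (H1 & H2)]]).
  - destruct (according_to_inv H1) as (r' & Hr' & -> & -> & Hsat).
    exists r'; split; [exact Hr' | left; split; [apply meta_atom_iff, H2 | exact Hsat]].
  - destruct (legally_valid_inv H1) as (r' & Hr' & -> & ->).
    destruct (according_to_rid_inv Hr Hacc) as [-> _].
    exists r'; split; [exact Hr' | right; right].
    split; [apply meta_atom_iff, H3 | split; [split; [exact H1 | exact I] |]].
    apply opp_cond_iff; split.
    + apply opposes_iff, opposes_sym, H2.
    + apply is_legal_iff; right; eexists; exact H1.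
  - destruct (legally_valid_inv H1) as (r' & Hr' & -> & ->).
    exists r'; split; [exact Hr' | right; left].
    split; [apply meta_atom_iff, H2 | split; [exact H1 | exact I]].
Qed.

Lemma overridden_not_legally_valid {r} :
  In r (cR c) -> sat_pre (S_of A) r -> overridden c (S_of A) r ->
  A (g_not_legally_valid (TR Atom (rid r))).
Proof.
  intros Hr Hsat (r' & Hr' & Hov).
  apply not_legally_valid_iff; exists (TA (rconc r)), (TR Atom (rid r')).
  apply defeated_iff; split; [apply according_to_rule; assumption | exists (TA (rconc r'))].
  destruct Hov as [(Hm & Hsat') | [(Hm & Hlv & _) | (Hm & (Hlv & _) & Hopp)]];
    apply meta_atom_iff in Hm; simpl in Hm.
  - left; split; [apply according_to_rule |]; assumption.
  - right; right; split; assumption.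
  - right; left; repeat split; try assumption.
    apply opp_cond_iff in Hopp as [Hopp _]; apply opposes_sym, opposes_iff, Hopp.
Qed.

Lemma lv_iff_not_overridden {r} :
  In r (cR c) -> lv (S_of A) r <-> sat_pre (S_of A) r /\ ~ overridden c (S_of A) r.
Proof.
  intros Hr; split.
  - intros [Hlv _]; apply legally_valid_iff in Hlv as [Hacc Hn].
    destruct (according_to_rid_inv Hr Hacc) as [_ Hsat].
    split; [exact Hsat |].
    intros Hov; apply Hn, overridden_not_legally_valid; assumption.
  - intros [Hsat Hno]; split; [|exact I].
    apply legally_valid_iff; split; [apply according_to_rule; assumption |].
    intros Hn; apply not_legally_valid_iff in Hn as (C & R1 & Hd).
    exact (Hno (defeated_overridden Hr Hd)).
Qed.

End Encoding.

Theorem lemma4 (Atom : Type) (c : config Atom) (A : gatom Atom -> Prop) :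
  wf_config c -> answer_set (asp_program c) A -> legal_model c (S_of A).
Proof.
  intros Hwf HA.
  refine (conj _ (conj _ (conj _ (conj _ (conj _ (conj _ (conj _ _))))))).
  - intros a [_ Ha]; exact Ha.
  - intros f Hf; split; [apply (is_legal_iff HA); left; eauto | exact I].
  - intros r Hr Hlv; split; [apply (lv_iff_not_overridden Hwf HA Hr), Hlv | split; [| exact I]].
    apply (is_legal_iff HA); right; eexists; exact (proj1 Hlv).
  - intros t [Ht _]; apply (is_legal_iff HA) in Ht as [Hf | (R & Hlv)]; [left; exact Hf | right].
    destruct (legally_valid_inv HA Hlv) as (r & Hr & -> & ->).
    exists r; repeat split; assumption.
  - intros ri rj Hi Hj Hd Hsat Hlv; apply (lv_iff_not_overridden Hwf HA Hi) in Hlv as [_ Hno].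
    apply Hno; exists rj; auto.
  - intros ri rj Hi Hj Hd Hlvi Hlvj; apply (lv_iff_not_overridden Hwf HA Hj) in Hlvj as [_ Hno].
    apply Hno; exists ri; auto.
  - intros ri rj Hi Hj Hd Hlvi Hopp Hlvj; apply (lv_iff_not_overridden Hwf HA Hj) in Hlvj as [_ Hno].
    apply Hno; exists ri; auto 6.
  - intros r Hr Hsat Hlv; apply NNPP; intros Hno.
    apply Hlv, (lv_iff_not_overridden Hwf HA Hr); auto.
Qed.
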